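(* Let $(R,[\cdot_\lambda\cdot],\alpha,\beta)$ be a BiHom-Lie conformal superalgebra, let $k,l,s,t\ge0$ be integers, and let $f\in\mathrm{Der}_{\alpha^k\beta^l}(R)$ and $g\in\mathrm{Der}_{\alpha^s\beta^t}(R)$ be homogeneous. Define $[f_\lambda g]_\mu(a)=f_\lambda(g_{\mu-\lambda}a)-(-1)^{|f||g|}g_{\mu-\lambda}(f_\lambda a)$ for $a\in R$. Then $[f_\lambda g]\in\mathrm{Der}_{\alpha^{k+s}\beta^{l+t}}(R)[\lambda]$, i.e. writing $[f_\lambda g]_\mu=\sum_n\lambda^n h^{(n)}_\mu$, each $h^{(n)}$ is an $\alpha^{k+s}\beta^{l+t}$-derivation of $R$.
   Context: All spaces are over $\mathbb{C}$. For a $\mathbb{C}[\partial]$-module $V$, $V[\lambda]=\mathbb{C}[\lambda]\otimes V$. $|a|$ denotes the parity of a homogeneous element. Substitution $\lambda\mapsto-\lambda-\partial$ means: expand in powers of $\lambda$ and replace $\lambda$ by $-\lambda-\partial$, $\partial$ acting on the coefficients. A BiHom-Lie conformal superalgebra $(R,[\cdot_\lambda\cdot],\alpha,\beta)$ is a $\mathbb{Z}_2$-graded $\mathbb{C}[\partial]$-module $R$ with two commuting linear maps $\alpha,\beta$ and a $\mathbb{C}$-linear map $R\otimes R\to R[\lambda]$, $a\otimes b\mapsto[a_\lambda b]$, with $[R_{i\,\lambda}R_j]\subseteq R_{i+j}[\lambda]$, such that for all homogeneous $a,b,c$: (1) $\alpha\partial=\partial\alpha$, $\beta\partial=\partial\beta$;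 (2) $\alpha([a_\lambda b])=[\alpha(a)_\lambda\alpha(b)]$, $\beta([a_\lambda b])=[\beta(a)_\lambda\beta(b)]$; (3) $[(\partial a)_\lambda b]=-\lambda[a_\lambda b]$, $[a_\lambda(\partial b)]=(\partial+\lambda)[a_\lambda b]$; (4) $[\beta(a)_\lambda\alpha(b)]=-(-1)^{|a||b|}[\beta(b)_{-\lambda-\partial}\alpha(a)]$; (5) $[\alpha\beta(a)_\lambda[b_\mu c]]=[[\beta(a)_\lambda b]_{\lambda+\mu}\beta(c)]+(-1)^{|a||b|}[\beta(b)_\mu[\alpha(a)_\lambda c]]$. A conformal linear map $f:R\to R$ of parity $|f|\in\mathbb{Z}_2$ is a family of $\mathbb{C}$-linear maps $f_\lambda:R\to R[\lambda]$ with $f_\lambda\partial=(\partial+\lambda)f_\lambda$ and $f_\lambda(R_\theta)\subseteq R_{\theta+|f|}[\lambda]$. For integers $k,l\ge0$, an $\alpha^k\beta^l$-derivation of $R$ is a homogeneous conformal linear map $f$ with $f_\lambda\circ\alpha=\alpha\circ f_\lambda$, $f_\lambda\circ\beta=\beta\circ f_\lambda$, and $f_\lambda([a_\mu b])=[f_\lambda(a)_{\lambda+\mu}\alpha^k\beta^l(b)]+(-1)^{|a||f|}[\alpha^k\beta^l(a)_\mu f_\lambda(b)]$ for all homogeneous $a,b\in R$. $\mathrm{Der}_{\alpha^k\beta^l}(R)$ denotes the span of the $\alpha^k\beta^l$-derivations. *)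

(* Polynomials in the formal variable(s) with coefficients in
   a vector space V are represented by coefficient lists (lowest degree first),
   compared coefficientwise; two-variable polynomials in (lambda, mu) are given
   by their coefficient functions  i j |-> coefficient of lambda^i mu^j. *)
From HB Require Import structures.
From mathcomp Require Import all_boot all_order all_algebra.
Set Implicit Arguments. Unset Strict Implicit. Unset Printing Implicit Defensive.
Import GRing.Theory.
Local Open Scope ring_scope.

Section BiHomLCSA.
Variables (F : fieldType) (V : lmodType F).
Implicit Types (p u : seq V).

Definition peq (p q : seq V) := forall n, p`_n = q`_n.
Definition padd (p q : seq V) : seq V :=
  mkseq (fun n => p`_n + q`_n) (maxn (size p) (size q)).
Definition pscale (c : F) p : seq V := map ( *:%R c) p.
Definition plam p : seq V := 0 :: p.
Definition pmap (f : V -> V) p : seq V := map f p.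
(* substitution lambda |-> -lambda - d, d acting on the coefficients:
   sum_n (-lambda-d)^n p_n = sum_j lambda^j sum_n C(n,j) (-1)^j (-d)^(n-j) p_n *)
Definition psubst (d : V -> V) p : seq V :=
  mkseq (fun j => \sum_(n < size p)
           ((-1) ^+ j *: iter (n - j) (fun x => - d x) p`_n) *+ 'C(n, j))
        (size p).

(* T_lambda(u(mu)) : T (lambda-valued) applied to the mu-coefficients of u *)
Definition liftmu (T : V -> seq V) p (i j : nat) : V := (T p`_j)`_i.
(* sum_i lambda^i T_mu(u_i) : T (mu-valued) applied to the lambda-coefficients *)
Definition liftlam (T : V -> seq V) p (i j : nat) : V := (T p`_i)`_j.
(* sum_p lambda^p T_{lambda+mu}(u_p), u = sum_p lambda^p u_p *)
Definition plus_sub (T : V -> seq V) p (i j : nat) : V :=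
  \sum_(r < size p) \sum_(q < size (T p`_r) | (r + q == i + j)%N)
     (T p`_r)`_q *+ 'C(q, j).

Definition abpow (alpha beta : V -> V) (k l : nat) (x : V) : V :=
  iter k alpha (iter l beta x).

Definition psign (a b : bool) : F := (-1) ^+ (a && b).

(* ---- BiHom-Lie conformal superalgebra structure on V ----
   Rg false = R_0, Rg true = R_1 ; d = partial ; br a b = [a_lambda b]. *)
Record is_bihom_lcsa (Rg : bool -> {pred V}) (d : V -> V)
    (br : V -> V -> seq V) (alpha beta : V -> V) : Prop := {
  grade_sub : forall th, 0 \in Rg th /\
     (forall (c : F) x y, x \in Rg th -> y \in Rg th -> c *: x + y \in Rg th);
  grade_direct : forall x, x \in Rg false -> x \in Rg true -> x = 0;
  grade_span : forall x, exists x0 x1,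
     [/\ x0 \in Rg false, x1 \in Rg true & x = x0 + x1];
  d_lin : forall (c : F) x y, d (c *: x + y) = c *: d x + d y;
  d_grade : forall th x, x \in Rg th -> d x \in Rg th;
  alpha_lin : forall (c : F) x y, alpha (c *: x + y) = c *: alpha x + alpha y;
  beta_lin : forall (c : F) x y, beta (c *: x + y) = c *: beta x + beta y;
  alpha_grade : forall th x, x \in Rg th -> alpha x \in Rg th;
  beta_grade : forall th x, x \in Rg th -> beta x \in Rg th;
  alpha_beta : forall x, alpha (beta x) = beta (alpha x);
  br_linl : forall n (c : F) x y b,
     (br (c *: x + y) b)`_n = c *: (br x b)`_n + (br y b)`_n;
  br_linr : forall n (c : F) a x y,
     (br a (c *: x + y))`_n = c *: (br a x)`_n + (br a y)`_n;
  br_grade : forall i j a b n, a \in Rg i -> b \in Rg j ->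
     (br a b)`_n \in Rg (i (+) j);
  alpha_d : forall x, alpha (d x) = d (alpha x);
  beta_d : forall x, beta (d x) = d (beta x);
  alpha_br : forall a b, peq (pmap alpha (br a b)) (br (alpha a) (alpha b));
  beta_br : forall a b, peq (pmap beta (br a b)) (br (beta a) (beta b));
  br_dl : forall a b, peq (br (d a) b) (pscale (-1) (plam (br a b)));
  br_dr : forall a b, peq (br a (d b)) (padd (pmap d (br a b)) (plam (br a b)));
  br_skew : forall pa pb a b, a \in Rg pa -> b \in Rg pb ->
     peq (br (beta a) (alpha b))
         (pscale (- psign pa pb) (psubst d (br (beta b) (alpha a))));
  br_jacobi : forall pa pb pc a b c, a \in Rg pa -> b \in Rg pb -> c \in Rg pc ->
     forall i j,
     liftmu (br (alpha (beta a))) (br b c) i j =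
       plus_sub (fun x => br x (beta c)) (br (beta a) b) i j
       + psign pa pb *: liftlam (br (beta b)) (br (alpha a) c) i j
}.

Variables (Rg : bool -> {pred V}) (d : V -> V) (br : V -> V -> seq V)
  (alpha beta : V -> V).

Definition conformal (pf : bool) (f : V -> seq V) : Prop :=
  [/\ forall n (c : F) x y, (f (c *: x + y))`_n = c *: (f x)`_n + (f y)`_n,
      forall x, peq (f (d x)) (padd (pmap d (f x)) (plam (f x))) &
      forall th x n, x \in Rg th -> (f x)`_n \in Rg (th (+) pf)].

Definition is_deriv (k l : nat) (pf : bool) (f : V -> seq V) : Prop :=
  [/\ conformal pf f,
      forall x, peq (f (alpha x)) (pmap alpha (f x)),
      forall x, peq (f (beta x)) (pmap beta (f x)) &
      forall pa pb a b, a \in Rg pa -> b \in Rg pb -> forall i j,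
        liftmu f (br a b) i j =
          plus_sub (fun x => br x (abpow alpha beta k l b)) (f a) i j
          + psign pa pf *: liftlam (br (abpow alpha beta k l a)) (f b) i j].

(* [f_lambda g]_mu (a) = f_lambda(g_{mu-lambda} a) - (-1)^{|f||g|} g_{mu-lambda}(f_lambda a).
   dbr_t1 / dbr_t2 : coefficient of lambda^n mu^m of the two terms. *)
Definition dbr_t1 (f g : V -> seq V) (a : V) (n m : nat) : V :=
  \sum_(q < size (g a)) \sum_(p < size (f (g a)`_q) | (p + q == n + m)%N)
     (-1) ^+ (q - m) *: ((f (g a)`_q)`_p *+ 'C(q, m)).
Definition dbr_t2 (f g : V -> seq V) (a : V) (n m : nat) : V :=
  \sum_(p < size (f a)) \sum_(q < size (g (f a)`_p) | (p + q == n + m)%N)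
     (-1) ^+ (q - m) *: ((g (f a)`_p)`_q *+ 'C(q, m)).
(* all nonzero mu-coefficients have index below this bound *)
Definition dbr_bound (f g : V -> seq V) (a : V) : nat :=
  maxn (size (g a)) (\big[maxn/0%N]_(p < size (f a)) size (g (f a)`_p)).

(* h^(n), where [f_lambda g]_mu = sum_n lambda^n h^(n)_mu *)
Definition der_bracket (pf pg : bool) (f g : V -> seq V) (n : nat) : V -> seq V :=
  fun a => mkseq (fun m => dbr_t1 f g a n m - psign pf pg *: dbr_t2 f g a n m)
                 (dbr_bound f g a).

End BiHomLCSA.

(* The coefficient of [λ^n μ^m] in [[f_λ g]_μ a] is the finite combination
   [Σ_(p + q = n + m) (-1)^(q - m) C(q, m) (f_p (g_q a) ∓ g_q (f_p a))] of the
   coefficients of [f] and [g].  Linearity, the compatibility with [α], [β] and the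
   grading therefore pass coefficientwise from [f] and [g]; for [∂] the two shifts by
   [λ] and by [μ - λ] add up to the shift by [μ] (Pascal's rule).  For the Leibniz
   rule, the Leibniz rules of [g] and then [f] expand [f_λ (g_(μ-λ) [a_ν b])] into
   four terms.  The two mixed terms cancel against those of [g_(μ-λ) (f_λ [a_ν b])]
   in the supercommutator, and the two others reassemble into the two sides of the
   rule for [[f_λ g]], because substituting [(μ - λ, λ)] or [(λ, μ - λ)] for the
   variables of a polynomial commutes with shifting the bracket variable: the two
   substituted forms add up to [μ]. *)

From Pilot Require Import Defs.
From HB Require Import structures.
From mathcomp Require Import all_boot all_order all_algebra.
From mathcomp Require Import zify ring.
Set Implicit Arguments. Unset Strict Implicit. Unset Printing Implicit Defensive.
Import GRing.Theory.
Local Open Scope ring_scope.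

(** * Antidiagonal sums and binomial kernels *)

Section Antidiagonal.
Variable V : nmodType.
Implicit Types (Phi : nat -> nat -> V) (X : nat -> V).

Definition antidiag (K : nat) Phi : V := \sum_(r < K.+1) Phi r (K - r)%N.

Lemma eq_antidiag K Phi1 Phi2 :
  (forall r q, (r + q = K)%N -> Phi1 r q = Phi2 r q) ->
  antidiag K Phi1 = antidiag K Phi2.
Proof. by move=> eq12; apply: eq_bigr => r _; apply: eq12; have := ltn_ord r; lia. Qed.

Lemma antidiagD K Phi1 Phi2 :
  antidiag K (fun r q => Phi1 r q + Phi2 r q) = antidiag K Phi1 + antidiag K Phi2.
Proof. exact: big_split. Qed.

Lemma antidiag_sym K Phi : antidiag K Phi = antidiag K (fun r q => Phi q r).
Proof.
rewrite /antidiag (reindex_inj rev_ord_inj); apply: eq_bigr => r _ /=.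
by rewrite subSS; congr Phi; have := ltn_ord r; lia.
Qed.

Lemma sum_delta M e X : \sum_(x < M) X x *+ (x == e :> nat) = X e *+ (e < M)%N.
Proof. by under eq_bigr do rewrite mulrb; rewrite -big_mkcond big_ord1_eq mulrb. Qed.

Lemma sum_delta_add M K x X :
  \sum_(y < M) X y *+ (x + y == K)%N = X (K - x)%N *+ ((x <= K) && (K - x < M))%N.
Proof.
rewrite (eq_bigr (fun y : 'I_M => X y *+ (x <= K)%N *+ (y == (K - x)%N :> nat))).
  by rewrite (sum_delta M (K - x) (fun y => X y *+ (x <= K)%N)) -mulrnA mulnb.
move=> y _; rewrite -mulrnA mulnb; congr (_ *+ nat_of_bool _).
by apply/eqP/andP => [<-|[? /eqP->]]; lia.
Qed.

Lemma antidiag_box M K Phi : (K < M)%N ->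
  antidiag K Phi = \sum_(x : 'I_M * 'I_M) Phi x.1 x.2 *+ (x.1 + x.2 == K)%N.
Proof.
move=> ltKM; rewrite -(pair_bigA _ (fun x y : 'I_M => Phi x y *+ (x + y == K)%N)).
rewrite /antidiag (big_ord_widen M (fun r => Phi r (K - r)%N) ltKM) big_mkcond.
by apply: eq_bigr => x _; rewrite sum_delta_add ltnS mulrb (_ : (K - x < M)%N) ?andbT //; lia.
Qed.

Lemma antidiag_deltal K a Phi :
  antidiag K (fun r q => Phi r q *+ (r == a)) = Phi a (K - a)%N *+ (a <= K)%N.
Proof. by rewrite /antidiag (sum_delta K.+1 a (fun r => Phi r (K - r)%N)) ltnS. Qed.

Lemma antidiag_deltar K c Phi :
  antidiag K (fun r q => Phi r q *+ (q == c)) = Phi (K - c)%N c *+ (c <= K)%N.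
Proof. by rewrite antidiag_sym (antidiag_deltal K c (fun q r => Phi r q)). Qed.

Lemma sum_pair (I J : finType) (G : I * J -> V) :
  \sum_(y : I * J) G y = \sum_(i : I) \sum_(j : J) G (i, j).
Proof. by rewrite pair_bigA; apply: eq_bigr => -[]. Qed.

Lemma antidiag_window K a u Phi : (a + u <= K)%N ->
  (forall p, (p < a)%N || (a + u < p)%N -> Phi p (K - p)%N = 0) ->
  antidiag K Phi = \sum_(t < u.+1) Phi (a + t)%N (K - (a + t))%N.
Proof.
move=> le_K Phi0; rewrite /antidiag.
transitivity (\sum_(p < K.+1) \sum_(t < u.+1) Phi p (K - p)%N *+ (a + t == p)%N).
  apply: eq_bigr => p _; have [win|out] := boolP ((a <= p) && (p <= a + u))%N.
    rewrite (sum_delta_add u.+1 p a (fun=> Phi p (K - p)%N)).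
    by rewrite (_ : (a <= p) && (p - a < u.+1))%N ?mulr1n //; lia.
  by rewrite Phi0 ?big1 // => [t _|]; rewrite ?mul0rn //; lia.
rewrite exchange_big; apply: eq_bigr => t _; under eq_bigr do rewrite eq_sym.
rewrite (sum_delta K.+1 (a + t) (fun p => Phi p (K - p)%N)) /=.
by rewrite (_ : (a + t < K.+1)%N) //; have := ltn_ord t; lia.
Qed.

Lemma sum_ord_widen0 n1 n2 (X : nat -> V) : (n1 <= n2)%N ->
  (forall i, (n1 <= i < n2)%N -> X i = 0) -> \sum_(i < n1) X i = \sum_(i < n2) X i.
Proof.
move=> le12 X0; rewrite (big_ord_widen n2 X le12) big_mkcond.
by apply: eq_bigr => i _; case: ifPn => // ge1; rewrite X0 // ltn_ord andbT leqNgt.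
Qed.

Lemma antidiag_sized N0 (S : nat -> nat) K (X : nat -> nat -> V) :
  (forall r q, (N0 <= r)%N || (S r <= q)%N -> X r q = 0) ->
  \sum_(r < N0) \sum_(q < S r | (r + q == K)%N) X r q = antidiag K X.
Proof.
move=> X0; pose Y r := X r (K - r)%N *+ (r <= K)%N.
transitivity (\sum_(r < N0) Y r).
  apply: eq_bigr => r _; rewrite big_mkcond.
  under eq_bigr do rewrite -mulrb.
  rewrite (sum_delta_add (S r) K r (X r)) /Y.
  by case: ltnP => [|le_S]; rewrite ?andbT // X0 ?le_S ?orbT ?mul0rn.
rewrite (sum_ord_widen0 (n2 := maxn N0 K.+1)) ?leq_maxl //; last first.
  by move=> r /andP[le_r _]; rewrite /Y X0 ?le_r ?mul0rn.
rewrite /antidiag (eq_bigr (fun r : 'I_K.+1 => Y r)) => [|r _]; last first.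
  by rewrite /Y -ltnS ltn_ord.
apply/esym/sum_ord_widen0; first exact: leq_maxr.
by move=> r /andP[]; rewrite ltnNge => /negPf; rewrite /Y => ->.
Qed.

End Antidiagonal.

Lemma bin_trinomial j t c : ('C(j + t, j) * 'C(c, j + t) = 'C(c, j) * 'C(c - j, t))%N.
Proof.
have [le_c|lt_c] := leqP (j + t) c; last first.
  have [le_jc|lt_cj] := leqP j c; last by rewrite !(@bin_small c) ?muln0.
  by rewrite (@bin_small c) ?(@bin_small (c - j)) ?muln0 //; lia.
have le_jc : (j <= c)%N by apply: leq_trans le_c; apply: leq_addr.
have le_t : (t <= c - j)%N by rewrite leq_subRL.
have Ejt := bin_fact (leq_addr t j); rewrite addKn in Ejt.
have Ec := bin_fact le_c; rewrite subnDA in Ec.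
have Ecj := bin_fact le_jc; have Ecjt := bin_fact le_t.
apply/eqP; rewrite -(@eqn_pmul2r (j`! * t`! * (c - j - t)`!)) ?muln_gt0 ?fact_gt0 //.
apply/eqP; transitivity c`!; first by rewrite -Ec -Ejt; ring.
by rewrite -Ecj -Ecjt; ring.
Qed.

Section SignedBinomial.
Variable R : pzRingType.

(* [binsgn q m] is the coefficient of [X^m] in [(X - 1)^q]. *)
Definition binsgn (q m : nat) : R := (-1) ^+ (q - m) *+ 'C(q, m).

Lemma binsgn_pascal q m :
  binsgn q m + binsgn q.+1 m = if m is m'.+1 then binsgn q m' else 0.
Proof.
rewrite /binsgn; case: m => [|m]; first by rewrite !subn0 !bin0 exprS mulN1r addrN.
case: (ltngtP q m) => [lt_qm|lt_mq|->].
- by rewrite !bin_small ?mulr0n ?addr0 //; lia.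
- rewrite subSS (_ : (q - m = (q - m.+1).+1)%N) ?binS ?mulrnDr ?exprS; last by lia.
  by rewrite mulN1r mulNrn addrA addrN add0r.
- by rewrite bin_small // subSS subnn !binn add0r.
Qed.

Lemma sum_binsgn u a i :
  \sum_(t < u.+1) binsgn (a + t) i *+ 'C(u, t) = binsgn a (i - u) *+ (u <= i)%N.
Proof.
elim: u a i => [|u IHu] a i; first by rewrite big_ord1 addn0 subn0 bin0.
have shifted : binsgn a i + \sum_(t < u.+1) binsgn (a.+1 + t) i *+ 'C(u, t.+1) =
    \sum_(t < u.+1) binsgn (a + t) i *+ 'C(u, t).
  transitivity (\sum_(t < u.+2) binsgn (a + t) i *+ 'C(u, t)).
    rewrite [RHS]big_ord_recl addn0 bin0; congr (_ + _).
    by apply: eq_bigr => t _; rewrite lift0 addSnnS.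
  by rewrite big_ord_recr /= bin_small // addr0.
rewrite big_ord_recl addn0 bin0.
under eq_bigr => t _ do rewrite lift0 binS mulrnDr -addSnnS.
rewrite big_split /= addrA shifted !IHu -mulrnDl binsgn_pascal.
case: (ltngtP u i) => [lt_ui|//|->]; last by rewrite subnn.
by rewrite (_ : (i - u = (i - u.+1).+1)%N) //; lia.
Qed.

End SignedBinomial.
Arguments binsgn {R}.

Definition kernel_coef (R : pzRingType) (V : lmodType R) (k : nat -> nat -> nat -> R)
    (n m : nat) (Z : nat -> nat -> V) : V :=
  antidiag (n + m) (fun p q => k m p q *: Z p q).

(* [coef_add i j Y] and [coef_sub n m Z] are the coefficients of [λ^i μ^j] in
   [Σ λ^r (λ + μ)^q Y r q] and of [λ^n μ^m] in [Σ λ^p (μ - λ)^q Z p q]. *)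
Notation coef_add := (kernel_coef (fun j _ q => 'C(q, j)%:R)).
Notation coef_sub := (kernel_coef (fun m _ q => binsgn q m)).

Section KernelCoefficientTheory.
Variables (R : pzRingType) (V : lmodType R).
Implicit Types (k : nat -> nat -> nat -> R) (Z : nat -> nat -> V).

Lemma eq_kernel_coef k n m Z1 Z2 :
  (forall p q, (p + q = n + m)%N -> Z1 p q = Z2 p q) ->
  kernel_coef k n m Z1 = kernel_coef k n m Z2.
Proof. by move=> eqZ; apply: eq_antidiag => p q /eqZ->. Qed.

Lemma kernel_coefD k n m Z1 Z2 :
  kernel_coef k n m (fun p q => Z1 p q + Z2 p q) = kernel_coef k n m Z1 + kernel_coef k n m Z2.
Proof. by rewrite -antidiagD; apply: eq_antidiag => p q _; rewrite scalerDr. Qed.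

Lemma kernel_coef_box M k n m Z : (n + m < M)%N ->
  kernel_coef k n m Z =
  \sum_(x : 'I_M * 'I_M) (k m x.1 x.2 *+ (x.1 + x.2 == n + m)%N) *: Z x.1 x.2.
Proof.
move=> ltM; rewrite /kernel_coef (antidiag_box _ ltM).
by apply: eq_bigr => x _; rewrite scalerMnl.
Qed.

Lemma sum_scale_exchange (I J : finType) (a : I -> R) (v : I -> V)
    (b : I -> J -> R) (w : J -> V) :
  (forall x, a x != 0 -> v x = \sum_y b x y *: w y) ->
  \sum_x a x *: v x = \sum_y (\sum_x a x * b x y) *: w y.
Proof.
move=> expand_v; rewrite (eq_bigr (fun y => \sum_x (a x * b x y) *: w y)) => [|y _]; last first.
  exact: scaler_suml.
rewrite exchange_big; apply: eq_bigr => x _.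
have [-> | /expand_v ->] := eqVneq (a x) 0.
  by rewrite scale0r big1 // => y _; rewrite mul0r scale0r.
by rewrite scaler_sumr; apply: eq_bigr => y _; rewrite scalerA.
Qed.

Section Box3.
Variables (M : nat) (W : nat -> nat -> nat -> V) (a : 'I_M * 'I_M -> R).
Let W3 (y : 'I_M * ('I_M * 'I_M)) := W y.1 y.2.1 y.2.2.

Lemma sum_box3_first r : (r < M)%N ->
  \sum_(x : 'I_M * 'I_M) a x *: W r x.1 x.2 =
  \sum_(y : 'I_M * ('I_M * 'I_M)) (a y.2 *+ (y.1 == r :> nat)) *: W3 y.
Proof.
move=> ltrM; rewrite [RHS]sum_pair exchange_big; apply: eq_bigr => x _.
under eq_bigr do rewrite -scalerMnl.
by rewrite (sum_delta M r (fun r' => a x *: W r' x.1 x.2)) ltrM.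
Qed.

Lemma sum_box3_last c : (c < M)%N ->
  \sum_(x : 'I_M * 'I_M) a x *: W x.1 x.2 c =
  \sum_(y : 'I_M * ('I_M * 'I_M)) (a (y.1, y.2.1) *+ (y.2.2 == c :> nat)) *: W3 y.
Proof.
move=> ltcM; rewrite sum_pair [RHS]sum_pair; apply: eq_bigr => a' _.
rewrite sum_pair; apply: eq_bigr => b' _ /=; under eq_bigr do rewrite -scalerMnl.
by rewrite (sum_delta M c (fun c' => a (a', b') *: W a' b' c')) ltcM.
Qed.

End Box3.

(* Both sides of [kernel_coef_add2] are linear in [W]; they are compared through
   their coefficients on the box [0, n + i + j]^3, which contains every index
   triple that occurs. *)
Section Composition.
Variables (k : nat -> nat -> nat -> R) (n i j : nat) (W : nat -> nat -> nat -> V).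
Local Notation M := (n + i + j).+1.
Local Notation I3 := ('I_M * ('I_M * 'I_M))%type.
Let W3 (y : I3) := W y.1 y.2.1 y.2.2.
Let mid_coef p q (y : I3) : nat := ('C(p + j - y.1, j) * 'C(y.2.2, p + j - y.1) *
  ((y.1 <= p + j) && (y.2.1 + y.2.2 == q + (p + j - y.1))))%N.

Lemma coef_add_box3 r q q' : (r < M)%N -> (q + q' < M)%N ->
  coef_add q q' (W r) = \sum_(y : I3)
    ('C(y.2.2, q')%:R *+ ((y.1 == r :> nat) && (y.2.1 + y.2.2 == q + q'))%N) *: W3 y.
Proof.
move=> ltr ltqq; rewrite (kernel_coef_box (M := M)) // sum_box3_first //.
by apply: eq_bigr => y _; rewrite -mulrnA mulnb andbC.
Qed.

Lemma coef_add2_box3 p q : (p + q <= n + i)%N ->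
  coef_add p j (fun r q' => coef_add q q' (W r)) = \sum_(y : I3) (mid_coef p q y)%:R *: W3 y.
Proof.
move=> le_pq; rewrite (kernel_coef_box (M := M)); last by lia.
rewrite (sum_scale_exchange (w := W3) (b := fun (z : 'I_M * 'I_M) (y : I3) =>
  'C(y.2.2, z.2)%:R *+ ((y.1 == z.1 :> nat) && (y.2.1 + y.2.2 == q + z.2))%N))
  => [|[[r ltr] [q' _]] /=]; last first.
  have [/eqP eq_z _|] := boolP (r + q' == p + j)%N; last by rewrite mulr0n eqxx.
  by apply: coef_add_box3 => //; lia.
apply: eq_bigr => y _; congr (_ *: _); under eq_bigr do rewrite mulrnAl.
rewrite -(antidiag_box (fun r q' => 'C(q', j)%:R * ('C(y.2.2, q')%:R *+
  ((y.1 == r :> nat) && (y.2.1 + y.2.2 == q + q'))%N))); last by lia.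
rewrite (eq_antidiag (Phi2 := fun r q' => ('C(q', j) * 'C(y.2.2, q') *
  (y.2.1 + y.2.2 == q + q'))%N%:R *+ (r == y.1))) => [|r q' _].
  by rewrite antidiag_deltal /mid_coef -mulrnA -mulnA mulnb andbC.
rewrite mulrnAr -natrM -!mulrnA eq_sym; congr _%:R.
by rewrite -!mulnA mulnb andbC.
Qed.

Lemma kernel_coef_add2_box3 :
  kernel_coef k n i (fun p q => coef_add p j (fun r q' => coef_add q q' (W r)))
  = \sum_(y : I3) antidiag (n + i) (fun p q => k i p q *+ mid_coef p q y) *: W3 y.
Proof.
rewrite (kernel_coef_box (M := M)); last by lia.
rewrite (sum_scale_exchange (w := W3) (b := fun (x : 'I_M * 'I_M) y => (mid_coef x.1 x.2 y)%:R))
  => [|[[p ?] [q ?]] /=]; last first.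
  have [/eqP eq_pq _|] := boolP (p + q == n + i)%N; last by rewrite mulr0n eqxx.
  by apply: coef_add2_box3; lia.
apply: eq_bigr => y _; congr (_ *: _); under eq_bigr do rewrite mulrnAl mulr_natr.
by rewrite -(antidiag_box (fun p q => k i p q *+ mid_coef p q y)) //; lia.
Qed.

Lemma coef_add_kernel_box3 :
  coef_add i j (fun r q => kernel_coef k n r (fun a b => W a b q))
  = \sum_(y : I3) (k (i + j - y.2.2)%N y.1 y.2.1 *+ ('C(y.2.2, j) *
      ((y.2.2 <= i + j) && (y.1 + y.2.1 + y.2.2 == n + i + j)))%N) *: W3 y.
Proof.
have inner c r : (c < M)%N -> (n + r < M)%N -> kernel_coef k n r (fun a b => W a b c)
    = \sum_(y : I3) (k r y.1 y.2.1 *+ ((y.1 + y.2.1 == n + r) && (y.2.2 == c :> nat))%N) *: W3 y.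
  move=> ltc ltr; rewrite (kernel_coef_box (M := M)) // sum_box3_last //.
  by apply: eq_bigr => y _; rewrite -mulrnA mulnb.
rewrite (kernel_coef_box (M := M)); last by lia.
rewrite (sum_scale_exchange (w := W3) (b := fun (z : 'I_M * 'I_M) (y : I3) =>
  k z.1 y.1 y.2.1 *+ ((y.1 + y.2.1 == n + z.1) && (y.2.2 == z.2 :> nat))%N))
  => [|[[r ?] [c ?]] /=]; last first.
  have [/eqP eq_rc _|] := boolP (r + c == i + j)%N; last by rewrite mulr0n eqxx.
  by apply: inner; lia.
apply: eq_bigr => -[[a ?] [[b ?] [c ?]]] _ /=; congr (_ *: _).
under eq_bigr do rewrite mulrnAl.
rewrite -(antidiag_box (fun r q => 'C(q, j)%:R *
  (k r a b *+ ((a + b == n + r) && (c == q :> nat))%N))); last by lia.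
rewrite (eq_antidiag (Phi2 := fun r q => 'C(q, j)%:R * k r a b *+
  (a + b == n + r)%N *+ (q == c))) => [|r q _]; last first.
  by rewrite mulrnAr -mulrnA mulnb (eq_sym q).
rewrite antidiag_deltar mulr_natl -!mulrnA mulnb; congr (_ *+ (_ * nat_of_bool _))%N.
by apply/andP/andP => -[/eqP ? ?]; split => //; apply/eqP; lia.
Qed.

(* When [k m p q] is the coefficient of [λ^n μ^m] in [ℓ₁^p ℓ₂^q] for two linear
   forms with [ℓ₁ + ℓ₂ = μ], as for [coef_sub] and its transpose, this hypothesis
   says [(ℓ₁ + ℓ₂)^u = μ^u]. *)
Hypothesis k_binomial : forall m u a b,
  \sum_(t < u.+1) k m (a + t)%N (b + (u - t))%N *+ 'C(u, t) = k (m - u)%N a b *+ (u <= m)%N.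

Lemma antidiag_kernel_binomial a b c :
  antidiag (n + i) (fun p q => k i p q *+ ('C(p + j - a, j) * 'C(c, p + j - a) *
      ((a <= p + j) && (b + c == q + (p + j - a))))%N)
  = k (i + j - c)%N a b *+ ('C(c, j) * ((c <= i + j) && (a + b + c == n + i + j)))%N.
Proof.
have [eqN|neN] := eqVneq (a + b + c)%N (n + i + j)%N; last first.
  rewrite andbF muln0 mulr0n /antidiag big1 // => p _.
  rewrite (_ : (_ && _) = false) ?muln0 ?mulr0n //; apply/negbTE/andP => -[? /eqP?].
  by move/eqP: neN; have := ltn_ord p; lia.
have [le_jc|lt_cj] := leqP j c; last first.
  rewrite bin_small // mul0n mulr0n /antidiag big1 // => p _.
  have [le_j|lt_j] := leqP j (p + j - a)%N; last by rewrite bin_small.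
  by rewrite (@bin_small c) ?muln0 ?mul0n //; lia.
rewrite (antidiag_window (a := a) (u := (c - j)%N)); last 2 first.
- by lia.
- move=> p out; have [le_a|] := leqP a (p + j)%N; last by rewrite muln0.
  have [le_j|lt_j] := leqP j (p + j - a)%N; last by rewrite bin_small.
  by rewrite (@bin_small c) ?muln0 ?mul0n //; lia.
transitivity (\sum_(t < (c - j).+1) k i (a + t)%N (b + (c - j - t))%N *+ 'C(c - j, t) *+ 'C(c, j)).
  apply: eq_bigr => t _; have := ltn_ord t; rewrite ltnS => le_t.
  rewrite (_ : (a + t + j - a)%N = (j + t)%N); last by lia.
  rewrite (_ : (_ && _) = true) ?muln1; last by apply/andP; split; [|apply/eqP]; lia.
  rewrite bin_trinomial mulnC mulrnA; congr (k _ _ _ *+ _ *+ _); lia.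
rewrite sumrMnl k_binomial -mulrnA (_ : (i - (c - j) = i + j - c)%N); last by lia.
by rewrite mulnC andbT (_ : (c - j <= i) = (c <= i + j))%N //; apply/idP/idP; lia.
Qed.

Lemma kernel_coef_add2 :
  kernel_coef k n i (fun p q => coef_add p j (fun r q' => coef_add q q' (W r)))
  = coef_add i j (fun r q => kernel_coef k n r (fun a b => W a b q)).
Proof.
rewrite kernel_coef_add2_box3 coef_add_kernel_box3; apply: eq_bigr => y _.
by rewrite antidiag_kernel_binomial.
Qed.

End Composition.

Lemma coef_sub_add2 n i j (W : nat -> nat -> nat -> V) :
  coef_sub n i (fun p q => coef_add p j (fun r q' => coef_add q q' (W r)))
  = coef_add i j (fun r q => coef_sub n r (fun a b => W a b q)).
Proof.
apply: kernel_coef_add2 => m u a b; rewrite -sum_binsgn (reindex_inj rev_ord_inj).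
apply: eq_bigr => t _; rewrite /= subSS bin_sub; last by have := ltn_ord t; lia.
by congr (binsgn _ _ *+ _); have := ltn_ord t; lia.
Qed.

Lemma coef_sub_add2_swap n i j (W : nat -> nat -> nat -> V) :
  coef_sub n i (fun p q => coef_add q j (fun r q' => coef_add p q' (W r)))
  = coef_add i j (fun r q => coef_sub n r (fun a b => W b a q)).
Proof.
have coef_subE m (Z : nat -> nat -> V) :
    coef_sub n m Z = kernel_coef (fun m p _ => binsgn p m) n m (fun p q => Z q p).
  exact: antidiag_sym.
rewrite coef_subE kernel_coef_add2 => [|m u a b]; last exact: sum_binsgn.
by apply: eq_antidiag => r q _; rewrite coef_subE.
Qed.

Lemma coef_sub_shift n m (Z : nat -> nat -> V) :
  coef_sub n m (fun p q =>
    (if p is p'.+1 then Z p' q else 0) + (if q is q'.+1 then Z p q' else 0))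
  = if m is m'.+1 then coef_sub n m' Z else 0.
Proof.
rewrite /kernel_coef /antidiag; under eq_bigr do rewrite scalerDr.
rewrite big_split /=; case Enm: (n + m)%N => [|K].
  by rewrite !big_ord1 /= !scaler0 addr0; case: m Enm => // m; rewrite addnS.
have shiftl : \sum_(r < K.+2)
      binsgn (K.+1 - r) m *: (if (r : nat) is r'.+1 then Z r' (K.+1 - r)%N else 0)
    = \sum_(r < K.+1) binsgn (K - r) m *: Z r (K - r)%N.
  by rewrite big_ord_recl scaler0 add0r; apply: eq_bigr => r _; rewrite lift0 subSS.
have shiftr : \sum_(r < K.+2) binsgn (K.+1 - r) m *: (if (K.+1 - r)%N is q'.+1 then Z r q' else 0)
    = \sum_(r < K.+1) binsgn (K - r).+1 m *: Z r (K - r)%N.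
  rewrite big_ord_recr /= subnn scaler0 addr0; apply: eq_bigr => r _.
  by rewrite (_ : (K.+1 - r = (K - r).+1)%N) //; have := ltn_ord r; lia.
rewrite shiftl shiftr -big_split {shiftl shiftr} /=; under eq_bigr do rewrite -scalerDl binsgn_pascal.
case: m Enm => [|m] Enm; first by rewrite big1 // => r _; rewrite scale0r.
by move: Enm; rewrite addnS => -[->].
Qed.

End KernelCoefficientTheory.

Section CommutativeScalars.
Variables (R : comPzRingType) (V : lmodType R).

Lemma kernel_coefZ k n m (c : R) (Z : nat -> nat -> V) :
  kernel_coef k n m (fun p q => c *: Z p q) = c *: kernel_coef k n m Z.
Proof.
rewrite /kernel_coef /antidiag scaler_sumr; apply: eq_bigr => r _.
by rewrite !scalerA mulrC.
Qed.

Lemma kernel_coefB k n m (Z1 Z2 : nat -> nat -> V) :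
  kernel_coef k n m (fun p q => Z1 p q - Z2 p q) = kernel_coef k n m Z1 - kernel_coef k n m Z2.
Proof.
rewrite -scaleN1r -kernel_coefZ -kernel_coefD.
by apply: eq_kernel_coef => p q _; rewrite scaleN1r.
Qed.

Lemma linear_kernel_coef_fun k n m (Z : nat -> nat -> V -> V) :
  (forall p q, linear (Z p q)) -> linear (fun x => kernel_coef k n m (fun p q => Z p q x)).
Proof.
move=> Z_lin c x y; rewrite -kernel_coefZ -kernel_coefD.
by apply: eq_kernel_coef => p q _; apply: Z_lin.
Qed.

Lemma linear_subr_scale (u v : V -> V) (a : R) :
  linear u -> linear v -> linear (fun x => u x - a *: v x).
Proof.
move=> u_lin v_lin c x y; rewrite u_lin v_lin scalerDr scalerBr !scalerA mulrC opprD.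
by rewrite addrACA.
Qed.

Lemma cross_terms_cancel (sg e1 e2 : R) (A1 A2 X Y B1 B2 : V) : sg * sg = 1 ->
  (A1 + (e2 * sg) *: X + e1 *: (Y + e2 *: B1))
    - sg *: (A2 + (e1 * sg) *: Y + e2 *: (X + e1 *: B2))
  = (A1 - sg *: A2) + (e2 * e1) *: (B1 - sg *: B2).
Proof.
move=> sg2; rewrite !scalerDr !scalerN !scalerA.
rewrite [sg * (e1 * sg)]mulrCA sg2 mulr1 [sg * e2]mulrC [e1 * e2]mulrC -[e2 * e1 * sg]mulrA.
rewrite [e1 * sg]mulrC mulrA.
set x := (e2 * sg) *: X; set y := e1 *: Y; set b1 := (e2 * e1) *: B1.
set a2 := sg *: A2; set b2 := (e2 * e1 * sg) *: B2.
rewrite !opprD !addrA (addrAC (A1 + x + y + b1) (- a2) (- y)).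
rewrite (addrAC (A1 + x + y) b1 (- y)) addrK.
rewrite (addrAC (A1 + x + b1) (- a2) (- x)) (addrAC (A1 + x) b1 (- x)) addrK.
by rewrite (addrAC A1 b1 (- a2)).
Qed.

End CommutativeScalars.

Section LinearMaps.
Variables (R : pzRingType) (V : lmodType R) (h : V -> V).
Hypothesis h_lin : linear h.
HB.instance Definition _ := GRing.isLinear.Build R V V *:%R h h_lin.

Lemma linear_fun0 : h 0 = 0. Proof. exact: raddf0. Qed.
Lemma linear_funD x y : h (x + y) = h x + h y. Proof. exact: raddfD. Qed.
Lemma linear_funB x y : h (x - y) = h x - h y. Proof. exact: raddfB. Qed.
Lemma linear_funZ c x : h (c *: x) = c *: h x. Proof. exact: linearZZ. Qed.

Lemma linear_kernel_coef k n m Z :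
  h (kernel_coef k n m Z) = kernel_coef k n m (fun p q => h (Z p q)).
Proof. by rewrite linear_sum; apply: eq_bigr => r _; rewrite linearZ. Qed.

Lemma coef_sub_linear_shift n m Z :
  coef_sub n m (fun p q => h (Z p q) +
    ((if p is p'.+1 then Z p' q else 0) + (if q is q'.+1 then Z p q' else 0)))
  = h (coef_sub n m Z) + if m is m'.+1 then coef_sub n m' Z else 0.
Proof. by rewrite kernel_coefD coef_sub_shift linear_kernel_coef. Qed.

End LinearMaps.

(** * Coefficient sequences and the bracket of derivations *)

Section CoefficientLists.
Variables (F : fieldType) (V : lmodType F).

Lemma nth_pmap (h : V -> V) (p : seq V) n : h 0 = 0 -> (Defs.pmap h p)`_n = h p`_n.
Proof.
move=> h0; have [lt_n|le_n] := ltnP n (size p); first by rewrite (nth_map 0).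
by rewrite !nth_default ?size_map.
Qed.

Lemma nth_padd (p s : seq V) n : (padd p s)`_n = p`_n + s`_n.
Proof.
have [lt_n|le_n] := ltnP n (maxn (size p) (size s)); first by rewrite nth_mkseq.
rewrite !nth_default ?size_mkseq ?addr0 //; apply: leq_trans le_n.
  exact: leq_maxr.
exact: leq_maxl.
Qed.

Lemma nth_plam (p : seq V) n : (plam p)`_n = if n is n'.+1 then p`_n' else 0.
Proof. by case: n. Qed.

Lemma plus_sub_coef_add (T : V -> seq V) (p : seq V) i j : (forall q, (T 0)`_q = 0) ->
  plus_sub T p i j = coef_add i j (fun r q => (T p`_r)`_q).
Proof.
move=> T0; rewrite /plus_sub (@antidiag_sized _ _ (fun r => size (T p`_r)) (i + j)
  (fun r q => (T p`_r)`_q *+ 'C(q, j))) => [|r q /orP[ge_r|ge_q]].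
- by apply: eq_antidiag => r q _; rewrite scaler_nat.
- by rewrite (nth_default 0 ge_r) T0 mul0rn.
- by rewrite (nth_default 0 ge_q) mul0rn.
Qed.

Lemma psignC a b : psign F a b = psign F b a.
Proof. by rewrite /psign andbC. Qed.

Lemma psignDl a b c : psign F (a (+) b) c = psign F a c * psign F b c.
Proof. by rewrite /psign andb_addl signr_addb. Qed.

Lemma psignDr a b c : psign F a (b (+) c) = psign F a b * psign F a c.
Proof. by rewrite !(psignC a) psignDl. Qed.

Lemma psign_sqr a b : psign F a b * psign F a b = 1.
Proof. by rewrite /psign -expr2 sqrr_sign. Qed.

Section BracketCoefficients.
Variables (f g : V -> seq V).
Hypotheses (f0 : forall p, (f 0)`_p = 0) (g0 : forall q, (g 0)`_q = 0).

Lemma dbr_t1E x n m : dbr_t1 f g x n m = coef_sub n m (fun p q => (f (g x)`_q)`_p).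
Proof.
rewrite /dbr_t1 (eq_bigr (fun q : 'I_(size (g x)) =>
    \sum_(p < size (f (g x)`_q) | (q + p == n + m)%N) binsgn q m *: (f (g x)`_q)`_p)).
  rewrite (@antidiag_sized _ _ (fun q => size (f (g x)`_q)) (n + m)
    (fun q p => binsgn q m *: (f (g x)`_q)`_p)) => [|q p /orP[ge_q|ge_p]].
  - exact: antidiag_sym.
  - by rewrite (nth_default 0 ge_q) f0 scaler0.
  - by rewrite (nth_default 0 ge_p) scaler0.
move=> q _; apply: eq_big => [p|p _]; first by rewrite addnC.
by rewrite /binsgn -scalerMnr scalerMnl.
Qed.

Lemma dbr_t2E x n m : dbr_t2 f g x n m = coef_sub n m (fun p q => (g (f x)`_p)`_q).
Proof.
rewrite /dbr_t2 (eq_bigr (fun p : 'I_(size (f x)) =>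
    \sum_(q < size (g (f x)`_p) | (p + q == n + m)%N) binsgn q m *: (g (f x)`_p)`_q)).
  rewrite (@antidiag_sized _ _ (fun p => size (g (f x)`_p)) (n + m)
    (fun p q => binsgn q m *: (g (f x)`_p)`_q)) // => p q /orP[ge_p|ge_q].
  - by rewrite (nth_default 0 ge_p) g0 scaler0.
  - by rewrite (nth_default 0 ge_q) scaler0.
by move=> p _; apply: eq_bigr => q _; rewrite /binsgn -scalerMnr scalerMnl.
Qed.

Lemma der_bracket_coef pf pg n x m : (der_bracket pf pg f g n x)`_m =
  coef_sub n m (fun p q => (f (g x)`_q)`_p)
  - psign F pf pg *: coef_sub n m (fun p q => (g (f x)`_p)`_q).
Proof.
rewrite -dbr_t1E -dbr_t2E /der_bracket.
have [lt_m|ge_m] := ltnP m (dbr_bound f g x); first by rewrite nth_mkseq.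
rewrite nth_default ?size_mkseq // /dbr_t1 /dbr_t2 !big1 ?scaler0 ?subr0 // => p _;
  rewrite big1 // => q _; rewrite bin_small ?mulr0n ?scaler0 //.
  apply: leq_trans (ltn_ord q) (leq_trans _ ge_m); apply: leq_trans (leq_maxr _ _).
  exact: (leq_bigmax (F := fun p : 'I_(size (f x)) => size (g (f x)`_p)) p).
by apply: leq_trans (ltn_ord p) (leq_trans (leq_maxl _ _) ge_m).
Qed.

End BracketCoefficients.

End CoefficientLists.

(** * Derivations of a BiHom-Lie conformal superalgebra *)

Section BiHomLCSA.
Variables (F : fieldType) (V : lmodType F) (Rg : bool -> {pred V}) (d : V -> V)
  (br : V -> V -> seq V) (alpha beta : V -> V).
Hypothesis HR : is_bihom_lcsa Rg d br alpha beta.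

Section Grade.
Variable th : bool.
HB.instance Definition _ :=
  GRing.isSubmodClosed.Build F V (Rg th) (GRing.submod_closed_semi (grade_sub HR th)).
End Grade.

Local Notation ab := (abpow alpha beta).

Lemma br_linearl n b : linear (fun x => (br x b)`_n).
Proof. by move=> c x y; apply: (br_linl HR). Qed.

Lemma br_linearr n a : linear (fun y => (br a y)`_n).
Proof. by move=> c x y; apply: (br_linr HR). Qed.

Lemma abpowD k l s t x : ab k l (ab s t x) = ab (k + s) (l + t) x.
Proof.
have iter_alpha_beta s' y : iter s' alpha (beta y) = beta (iter s' alpha y).
  by elim: s' => //= s' ->; rewrite (alpha_beta HR).
have iter_beta_alpha y : iter l beta (iter s alpha y) = iter s alpha (iter l beta y).
  by elim: l => //= l' ->; rewrite iter_alpha_beta.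
by rewrite /abpow iter_beta_alpha !iterD.
Qed.

Lemma abpow_grade k l th x : x \in Rg th -> ab k l x \in Rg th.
Proof.
move=> x_th; elim: k => [|k IHk] /=; last exact: (alpha_grade HR).
by elim: l => [|l IHl] //=; apply: (beta_grade HR).
Qed.

Section Derivation.
Variables (k l : nat) (pf : bool) (f : V -> seq V).
Hypothesis Hf : is_deriv Rg d br alpha beta k l pf f.

Lemma deriv_linear n : linear (fun x => (f x)`_n).
Proof. by case: Hf => -[f_lin _ _] _ _ _ c x y; apply: f_lin. Qed.

Lemma deriv0 n : (f 0)`_n = 0.
Proof. exact: linear_fun0 (deriv_linear n). Qed.

Lemma deriv_d x n : (f (d x))`_n = d (f x)`_n + (if n is n'.+1 then (f x)`_n' else 0).
Proof.
case: Hf => -[_ f_d _] _ _ _.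
by rewrite f_d nth_padd nth_pmap ?nth_plam ?(linear_fun0 (d_lin HR)).
Qed.

Lemma deriv_grade th x n : x \in Rg th -> (f x)`_n \in Rg (th (+) pf).
Proof. by case: Hf => -[_ _ f_gr] _ _ _; apply: f_gr. Qed.

Lemma deriv_alpha x n : (f (alpha x))`_n = alpha (f x)`_n.
Proof. by case: Hf => _ f_al _ _; rewrite f_al nth_pmap ?(linear_fun0 (alpha_lin HR)). Qed.

Lemma deriv_beta x n : (f (beta x))`_n = beta (f x)`_n.
Proof. by case: Hf => _ _ f_be _; rewrite f_be nth_pmap ?(linear_fun0 (beta_lin HR)). Qed.

Lemma deriv_abpow s t x n : (f (ab s t x))`_n = ab s t (f x)`_n.
Proof.
elim: s => [|s IHs] /=; last by rewrite deriv_alpha IHs.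
by elim: t => [|t IHt] //=; rewrite deriv_beta IHt.
Qed.

Lemma deriv_leibniz pa pb a b : a \in Rg pa -> b \in Rg pb -> forall i j,
  (f (br a b)`_j)`_i =
  coef_add i j (fun r q => (br (f a)`_r (ab k l b))`_q)
  + psign F pa pf *: (br (ab k l a) (f b)`_i)`_j.
Proof.
move=> a_pa b_pb i j; case: Hf => _ _ _ /(_ pa pb a b a_pa b_pb i j).
rewrite /liftmu /liftlam => ->; rewrite plus_sub_coef_add // => q.
exact: linear_fun0 (br_linearl q _).
Qed.

End Derivation.

Section DerivationPair.
Variables (k l s t : nat) (pf pg : bool) (f g : V -> seq V).
Hypotheses (Hf : is_deriv Rg d br alpha beta k l pf f)
  (Hg : is_deriv Rg d br alpha beta s t pg g).

Lemma deriv2_leibniz pa pb a b p q j : a \in Rg pa -> b \in Rg pb ->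
  (f (g (br a b)`_j)`_q)`_p =
    coef_add q j (fun r q' => coef_add p q' (fun r' q'' =>
      (br (f (g a)`_r)`_r' (ab (k + s) (l + t) b))`_q''))
  + psign F (pa (+) pg) pf *:
      coef_add q j (fun r q' => (br (ab k l (g a)`_r) (ab s t (f b)`_p))`_q')
  + psign F pa pg *:
      (coef_add p j (fun r q' => (br (ab s t (f a)`_r) (ab k l (g b)`_q))`_q')
       + psign F pa pf *: (br (ab (k + s) (l + t) a) (f (g b)`_q)`_p)`_j).
Proof.
move=> a_pa b_pb; have f_lin := deriv_linear Hf p.
rewrite (deriv_leibniz Hg a_pa b_pb) (linear_funD f_lin) (linear_funZ f_lin).
rewrite (linear_kernel_coef f_lin).
rewrite (deriv_leibniz Hf (abpow_grade s t a_pa) (deriv_grade Hg q b_pb)) abpowD.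
congr (_ + _); last first.
  congr (_ *: (_ + _)); apply: eq_kernel_coef => r q' _.
  by rewrite (deriv_abpow Hf).
rewrite -kernel_coefZ -kernel_coefD; apply: eq_kernel_coef => r q' _.
rewrite (deriv_leibniz Hf (deriv_grade Hg r a_pa) (abpow_grade s t b_pb)).
by rewrite abpowD (deriv_abpow Hf).
Qed.

End DerivationPair.

Section DerivationBracket.
Variables (k l s t : nat) (pf pg : bool) (f g : V -> seq V) (n : nat).
Hypotheses (Hf : is_deriv Rg d br alpha beta k l pf f)
  (Hg : is_deriv Rg d br alpha beta s t pg g).
Local Notation h := (der_bracket pf pg f g n).
Local Notation sg := (psign F pf pg).
Local Notation h_coef := (der_bracket_coef (deriv0 Hf) (deriv0 Hg)).

Lemma der_bracket_linear m : linear (fun x => (h x)`_m).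
Proof.
have lin_fg : linear (fun x => coef_sub n m (fun p q => (f (g x)`_q)`_p)).
  apply: linear_kernel_coef_fun => p q c x y /=.
  by rewrite (deriv_linear Hg) (deriv_linear Hf).
have lin_gf : linear (fun x => coef_sub n m (fun p q => (g (f x)`_p)`_q)).
  apply: linear_kernel_coef_fun => p q c x y /=.
  by rewrite (deriv_linear Hf) (deriv_linear Hg).
by move=> c x y; rewrite !h_coef; apply: (linear_subr_scale sg lin_fg lin_gf c x y).
Qed.

Lemma der_bracket_d x : peq (h (d x)) (padd (Defs.pmap d (h x)) (plam (h x))).
Proof.
move=> m; rewrite nth_padd nth_pmap ?(linear_fun0 (d_lin HR)) // nth_plam !h_coef.
rewrite (eq_kernel_coef _ (Z2 := fun p q => d (f (g x)`_q)`_p +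
    ((if p is p'.+1 then (f (g x)`_q)`_p' else 0) +
     (if q is q'.+1 then (f (g x)`_q')`_p else 0)))) => [|p q _]; last first.
  rewrite (deriv_d Hg) (linear_funD (deriv_linear Hf p)) (deriv_d Hf) -addrA.
  by case: q => [|q]; rewrite ?(deriv0 Hf).
rewrite [X in _ - _ *: X](eq_kernel_coef _ (Z2 := fun p q => d (g (f x)`_p)`_q +
    ((if p is p'.+1 then (g (f x)`_p')`_q else 0) +
     (if q is q'.+1 then (g (f x)`_p)`_q' else 0)))) => [|p q _]; last first.
  rewrite (deriv_d Hf) (linear_funD (deriv_linear Hg q)) (deriv_d Hg) addrAC -addrA.
  by case: p => [|p]; rewrite ?(deriv0 Hg) ?addr0.
rewrite !(coef_sub_linear_shift (d_lin HR)) (linear_funB (d_lin HR)) (linear_funZ (d_lin HR)).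
rewrite scalerDr opprD addrACA.
by case: m => [|m]; rewrite ?scaler0 ?subr0 // h_coef.
Qed.

Lemma der_bracket_grade th x m : x \in Rg th -> (h x)`_m \in Rg (th (+) (pf (+) pg)).
Proof.
move=> x_th; rewrite h_coef rpredB ?rpredZ //; apply: rpred_sum => r _; apply: rpredZ.
  by rewrite addbA addbAC; apply: (deriv_grade Hf); apply: (deriv_grade Hg).
by rewrite addbA; apply: (deriv_grade Hg); apply: (deriv_grade Hf).
Qed.

Lemma der_bracket_commute (e : V -> V) : linear e ->
    (forall x m, (f (e x))`_m = e (f x)`_m) -> (forall x m, (g (e x))`_m = e (g x)`_m) ->
  forall x, peq (h (e x)) (Defs.pmap e (h x)).
Proof.
move=> e_lin ef eg x m; rewrite nth_pmap ?(linear_fun0 e_lin) // !h_coef.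
rewrite (linear_funB e_lin) (linear_funZ e_lin) !(linear_kernel_coef e_lin).
congr (_ - _ *: _); apply: eq_kernel_coef => p q _; first by rewrite eg ef.
by rewrite ef eg.
Qed.

Lemma der_bracket_leibniz pa pb a b : a \in Rg pa -> b \in Rg pb -> forall i j,
  liftmu h (br a b) i j =
    plus_sub (fun x => br x (ab (k + s) (l + t) b)) (h a) i j
    + psign F pa (pf (+) pg) *: liftlam (br (ab (k + s) (l + t) a)) (h b) i j.
Proof.
move=> a_pa b_pb i j; rewrite /liftmu /liftlam plus_sub_coef_add => [|q]; last first.
  exact: linear_fun0 (br_linearl q _).
rewrite h_coef; under eq_kernel_coef => p q _ do rewrite (deriv2_leibniz Hf Hg p q j a_pa b_pb).
under [X in _ - _ *: X]eq_kernel_coef => p q _ do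
  rewrite (deriv2_leibniz Hg Hf q p j a_pa b_pb) [(s + k)%N]addnC [(t + l)%N]addnC.
rewrite !kernel_coefD !kernel_coefZ !kernel_coefD !kernel_coefZ coef_sub_add2_swap coef_sub_add2.
rewrite psignDl (psignC _ pg) psignDl psignDr.
under [in RHS]eq_kernel_coef => r q _ do rewrite h_coef (linear_funB (br_linearl q _))
  (linear_funZ (br_linearl q _)) !(linear_kernel_coef (br_linearl q _)).
rewrite h_coef (linear_funB (br_linearr j _)) (linear_funZ (br_linearr j _)).
rewrite !(linear_kernel_coef (br_linearr j _)) kernel_coefB kernel_coefZ.
by rewrite cross_terms_cancel ?psign_sqr.
Qed.

End DerivationBracket.

End BiHomLCSA.

Theorem mainTheorem10 (F : fieldType) (V : lmodType F)
  (Rg : bool -> {pred V}) (d : V -> V) (br : V -> V -> seq V)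
  (alpha beta : V -> V)
  (HR : is_bihom_lcsa Rg d br alpha beta)
  (k l s t : nat) (pf pg : bool) (f g : V -> seq V) :
  is_deriv Rg d br alpha beta k l pf f ->
  is_deriv Rg d br alpha beta s t pg g ->
  forall n : nat,
    is_deriv Rg d br alpha beta (k + s) (l + t) (pf (+) pg)
      (der_bracket pf pg f g n).
Proof.
move=> Hf Hg n; split; first split.
- exact: (der_bracket_linear n Hf Hg).
- exact: (der_bracket_d HR n Hf Hg).
- exact: (der_bracket_grade HR n Hf Hg).
- exact: (der_bracket_commute n Hf Hg (alpha_lin HR) (deriv_alpha HR Hf) (deriv_alpha HR Hg)).
- exact: (der_bracket_commute n Hf Hg (beta_lin HR) (deriv_beta HR Hf) (deriv_beta HR Hg)).
- exact: (der_bracket_leibniz HR n Hf Hg).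
Qed.
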